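(* Let $X$ be a real Banach space with the Ball Small Combination of Slice Property ($BSCSP$). Then for every separable closed subspace $Y$ of $X$ there exists a separable closed subspace $Z$ of $X$ with $Y\subseteq Z$ such that $Z$ has $BSCSP$.
   Context: For a real Banach space $X$, $B_X$ denotes its closed unit ball and $X^*$ its dual. A slice of a bounded set $C\subseteq X$ is a set $S(C,x^*,\alpha)=\{x\in C: x^*(x)>\sup x^*(C)-\alpha\}$ with $x^*\in X^*$, $\|x^*\|=1$, $\alpha>0$. A convex combination of slices of $C$ is a set $\sum_{i=1}^k \lambda_i S_i=\{\sum_{i=1}^k\lambda_i x_i : x_i\in S_i\}$ where $S_1,\dots,S_k$ are slices of $C$ and $\lambda_i>0$ with $\sum_i\lambda_i=1$. $X$ has the Ball Small Combination of Slice Property ($BSCSP$) if for every $\varepsilon>0$ there is a convex combination of slices of $B_X$ of diameter less than $\varepsilon$. *)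

From HB Require Import structures.
From mathcomp Require Import all_boot all_order all_algebra.
From mathcomp Require Import all_classical all_reals all_analysis.
Set Implicit Arguments. Unset Strict Implicit. Unset Printing Implicit Defensive.
Import Order.TTheory GRing.Theory Num.Theory.
Import numFieldNormedType.Exports.
Local Open Scope classical_set_scope.
Local Open Scope ring_scope.

Section BSCSP.
Variables (R : realType) (X : completeNormedModType R).

Definition is_subspace (Z : set X) : Prop :=
  Z 0 /\ forall (a : R) (x y : X), Z x -> Z y -> Z (a *: x + y).

Definition closed_subspace (Z : set X) : Prop := is_subspace Z /\ closed Z.

Definition separable_set (Z : set X) : Prop :=
  exists D : set X, [/\ countable D, D `<=` Z & Z `<=` closure D].

Definition unit_ball (Z : set X) : set X := [set x | Z x /\ `|x| <= 1].

(* an element of the dual Z^* : a function X -> R which is linear and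
   continuous on Z (its values off Z are irrelevant) *)
Definition dual_elt (Z : set X) (g : X -> R) : Prop :=
  (forall (a : R) (x y : X), Z x -> Z y -> g (a *: x + y) = a * g x + g y)
  /\ {within Z, continuous g}.

Definition dual_norm (Z : set X) (g : X -> R) : R :=
  sup [set `|g x| | x in unit_ball Z].

Definition slice (C : set X) (g : X -> R) (alpha : R) : set X :=
  [set x | C x /\ g x > sup (g @` C) - alpha].

Definition is_slice_of_ball (Z : set X) (S : set X) : Prop :=
  exists (g : X -> R) (alpha : R),
    [/\ dual_elt Z g, dual_norm Z g = 1, 0 < alpha & S = slice (unit_ball Z) g alpha].

Definition convex_comb_set (n : nat) (lam : 'I_n -> R) (S : 'I_n -> set X) : set X :=
  [set y | exists x : 'I_n -> X, (forall i, S i (x i)) /\ y = \sum_(i < n) lam i *: x i].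

Definition diam (A : set X) : \bar R :=
  ereal_sup [set (`|x - y|)%:E | x in A & y in A].

Definition BSCSP_on (Z : set X) : Prop :=
  forall eps : R, 0 < eps ->
    exists (n : nat) (lam : 'I_n -> R) (S : 'I_n -> set X),
      [/\ (forall i, 0 < lam i), \sum_(i < n) lam i = 1,
          (forall i, is_slice_of_ball Z (S i)) &
          (diam (convex_comb_set lam S) < eps%:E)%E].

Definition BSCSP : Prop := BSCSP_on setT.

End BSCSP.

From HB Require Import structures.
From mathcomp Require Import all_boot all_order all_algebra.
From mathcomp Require Import all_classical all_reals all_analysis.
From mathcomp Require Import lra.
Import Order.TTheory GRing.Theory Num.Theory.
Import numFieldNormedType.Exports.
Local Open Scope classical_set_scope.
Local Open Scope ring_scope.
Set Implicit Arguments. Unset Strict Implicit.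

(* The key fact is
   that a slice of B_X can be "anchored" (slice_anchor): for a norm-one
   functional g and alpha > 0 pick p in B_X with g p > 1 - gam, where
   gam = min(alpha, 1)/2.  If a subspace Z contains p, the restriction of g to Z
   has norm m with g p <= m <= 1, and the slice of B_Z cut by g/m with width gam
   lies inside the slice S(B_X, g, 2 gam), hence inside S(B_X, g, alpha).
   Consequently, if Z contains the anchors of the slices of a convex combination
   of slices of B_X of diameter < eps, then the corresponding combination of the
   restricted slices of B_Z is a subset of it and still has diameter < eps.

   Using BSCSP with eps = 1/(k+1) for every k, we get countably many anchors.
   Z is the closed linear span of these anchors together with a countable dense
   subset of Y.  Closed spans of countable families are separable closed
   subspaces: their rational combinations form a countable dense set, and the
   closure of the rational span is a linear subspace because Q is dense in R
   and the vector operations are continuous. *)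

Lemma sup_scale (R : realType) (E : set R) (c : R) : 0 < c -> has_sup E ->
  sup [set c * x | x in E] = c * sup E.
Proof.
move=> c0 hsE; have [[x0 Ex0] _] := hsE; have supE := sup_upper_bound hsE.
have ubcE : ubound [set c * x | x in E] (c * sup E).
  by move=> _ [x Ex <-]; rewrite ler_pM2l // supE.
apply/eqP; rewrite eq_le; apply/andP; split; first by apply: ge_sup => //; exists (c * x0), x0.
rewrite -ler_pdivlMl //; apply: ge_sup; first by exists x0.
move=> x Ex; rewrite ler_pdivlMl //; apply: sup_upper_bound; last by exists x.
by split; [exists (c * x0), x0 | exists (c * sup E)].
Qed.

Lemma natSinv_lt (R : realType) (eps : R) : 0 < eps -> exists k : nat, k.+1%:R^-1 < eps.
Proof.
move=> e0; have [N _ hN] := near_infty_natSinv_lt (PosNum e0).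
by exists N; apply: hN => /=.
Qed.

(* A continuous map sending A into the closure of B sends the closure of A
   there as well; this is how closures inherit algebraic closure properties. *)
Lemma closure_image_sub (T U : topologicalType) (f : T -> U) (A : set T) (B : set U) :
  continuous f -> f @` A `<=` closure B -> f @` closure A `<=` closure B.
Proof.
move=> cf fAB _ [x Ax <-].
have clB : closed (f @^-1` closure B) := (continuous_closedP f).1 cf _ (@closed_closure _ B).
have AB : A `<=` f @^-1` closure B by move=> a Aa; apply: fAB; exists a.
by have := closureS AB Ax; rewrite -(closure_id _).1.
Qed.

Lemma dense_closure (T : topologicalType) (S : set T) (x : T) : dense S -> closure S x.
Proof.
move=> dS B; rewrite nbhsE => -[U [oU Ux] UB].
by have [y [Uy Sy]] := dS U (ex_intro _ x Ux) oU; exists y; split => //; apply: UB.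
Qed.

Section Functionals.
Variables (R : realType) (X : completeNormedModType R).
Implicit Types (Z : set X) (g : X -> R).

Lemma dual_elt0 Z g : is_subspace Z -> dual_elt Z g -> g 0 = 0.
Proof.
move=> [Z0 _] [lin _]; have := lin 1 0 0 Z0 Z0.
by rewrite scaler0 addr0 mul1r -[LHS]add0r => /addIr.
Qed.

Lemma dual_eltZ Z g a x : is_subspace Z -> dual_elt Z g -> Z x ->
  g (a *: x) = a * g x.
Proof.
move=> sZ dg Zx; have := dg.1 a x 0 Zx sZ.1.
by rewrite !addr0 (dual_elt0 sZ dg) addr0.
Qed.

Lemma dual_eltS Z Z' g : Z `<=` Z' -> dual_elt Z' g -> dual_elt Z g.
Proof.
move=> ZZ' [lin cont]; split; last exact: continuous_subspaceW cont.
by move=> a x y Zx Zy; apply: lin; apply: ZZ'.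
Qed.

Lemma dual_eltM Z g c : dual_elt Z g -> dual_elt Z (fun x => c * g x).
Proof.
move=> [lin cont]; split.
  by move=> a x y Zx Zy; rewrite lin // mulrDr mulrCA.
by move=> x; apply: cvgM => //; [exact: cvg_cst | exact: cont].
Qed.

Lemma is_subspaceT : is_subspace (@setT X).
Proof. by []. Qed.

Lemma unit_ball0 Z : is_subspace Z -> unit_ball Z 0.
Proof. by move=> [Z0 _]; split; rewrite ?normr0. Qed.

Lemma unit_ballN Z x : is_subspace Z -> unit_ball Z x -> unit_ball Z (- x).
Proof.
move=> [Z0 lin] [Zx nx]; split; last by rewrite normrN.
by rewrite -[- x]addr0 -scaleN1r; apply: lin.
Qed.

(* A nonzero dual norm is the supremum of a bounded set (otherwise the
   library's sup defaults to 0), so it bounds |g| on the unit ball. *)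
Lemma dual_norm_has_sup Z g : dual_norm Z g != 0 ->
  has_sup [set `|g x| | x in unit_ball Z].
Proof.
move=> dn0; have [//|nsup] := pselect (has_sup [set `|g x| | x in unit_ball Z]).
by move: dn0; rewrite /dual_norm sup_out ?eqxx.
Qed.

Lemma dual_norm_ge Z g x : dual_norm Z g != 0 -> unit_ball Z x ->
  `|g x| <= dual_norm Z g.
Proof.
move=> dn0 Bx; apply: sup_upper_bound; first exact: dual_norm_has_sup.
by exists x.
Qed.

Lemma dual_normM Z g c : 0 < c -> dual_norm Z g != 0 ->
  dual_norm Z (fun x => c * g x) = c * dual_norm Z g.
Proof.
move=> c0 dn0; rewrite /dual_norm -(sup_scale c0 (dual_norm_has_sup dn0)).
by rewrite image_comp; congr sup; apply: eq_imagel => x _ /=; rewrite normrM gtr0_norm.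
Qed.

Lemma has_sup_image_ball Z g : is_subspace Z -> dual_norm Z g != 0 ->
  has_sup (g @` unit_ball Z).
Proof.
move=> sZ dn0; split; first by exists (g 0), 0; first exact: unit_ball0.
exists (dual_norm Z g) => _ [x Bx <-].
exact: le_trans (ler_norm _) (dual_norm_ge dn0 Bx).
Qed.

(* By symmetry of the ball, sup g(B_Z) equals the dual norm; for a norm-one
   functional the slices of B_Z are thus S(B_Z, g, a) = [x in B_Z | g x > 1 - a]. *)
Lemma sup_dual_elt_ball Z g : is_subspace Z -> dual_elt Z g -> dual_norm Z g = 1 ->
  sup (g @` unit_ball Z) = 1.
Proof.
move=> sZ dg dn1; have dn0 : dual_norm Z g != 0 by rewrite dn1 oner_eq0.
have B0 := unit_ball0 sZ.
have ub1 x : unit_ball Z x -> g x <= 1.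
  by move=> Bx; rewrite -dn1; apply: le_trans (ler_norm _) (dual_norm_ge dn0 Bx).
have hs := has_sup_image_ball sZ dn0.
apply/eqP; rewrite eq_le; apply/andP; split.
  by apply: ge_sup; [exists (g 0), 0 | move=> _ [x Bx <-]; exact: ub1].
rewrite -{1}dn1; apply: ge_sup; first by exists `|g 0|, 0.
move=> _ [x Bx <-]; rewrite ler_norml lerNl -mulN1r -(dual_eltZ _ sZ dg Bx.1).
rewrite scaleN1r; apply/andP; split; apply: sup_upper_bound => //.
by exists (- x); first exact: unit_ballN.
Qed.

Lemma slice_widen (C : set X) g al al' : al <= al' -> slice C g al `<=` slice C g al'.
Proof. by move=> le_al x [Cx gx]; split => //; apply: le_lt_trans gx; rewrite lerD2l lerN2. Qed.

End Functionals.
Arguments is_subspaceT {R X}.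

Section SliceRestriction.
Variables (R : realType) (X : completeNormedModType R) (g : X -> R).
Hypotheses (dg : dual_elt setT g) (ng : dual_norm setT g = 1).
Variables (Z : set X) (p : X).
Hypotheses (sZ : is_subspace Z) (BZp : unit_ball Z p) (gp0 : 0 < g p).

Let m := dual_norm Z g.
Let h x := m^-1 * g x.

Lemma restriction_norm_bounds : g p <= m <= 1.
Proof.
have ng0 : dual_norm setT g != 0 by rewrite ng oner_eq0.
have le1 x : unit_ball Z x -> `|g x| <= 1.
  by move=> [_ nx]; rewrite -ng; apply: dual_norm_ge.
apply/andP; split.
  apply: le_trans (ler_norm _) _; apply: sup_upper_bound; last by exists p.
  by split; [exists `|g p|, p | exists 1 => _ [x Bx <-]; exact: le1].
by apply: ge_sup; [exists `|g p|, p | move=> _ [x Bx <-]; exact: le1].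
Qed.

Lemma restriction_norm_gt0 : 0 < m.
Proof. by have /andP[gpm _] := restriction_norm_bounds; exact: lt_le_trans gpm. Qed.

Lemma renormalized_restriction_norm : dual_norm Z h = 1.
Proof.
have m0 := restriction_norm_gt0.
by rewrite /h dual_normM ?invr_gt0 ?mulVf ?gt_eqF.
Qed.

Lemma renormalized_slice_of_ball gam : 0 < gam ->
  is_slice_of_ball Z (slice (unit_ball Z) h gam).
Proof.
move=> gam0; exists h, gam; split => //; last exact: renormalized_restriction_norm.
exact: dual_eltM (dual_eltS (@subsetT _ Z) dg).
Qed.

(* ... which, once g p > 1 - gam, lie in the slice of B_X of double width:
   for x in the slice, g x = m h x > m (h p - gam) >= g p - gam > 1 - 2 gam. *)
Lemma renormalized_slice_sub gam : 0 < gam -> 1 - gam < g p ->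
  slice (unit_ball Z) h gam `<=` slice (unit_ball setT) g (gam *+ 2).
Proof.
move=> gam0 gpgam x [Bx hx]; split; first by case: Bx.
have m0 := restriction_norm_gt0; have /andP[_ m1] := restriction_norm_bounds.
have hn0 : dual_norm Z h != 0 by rewrite renormalized_restriction_norm oner_eq0.
have hph : h p <= sup (h @` unit_ball Z).
  by apply: sup_upper_bound; [exact: has_sup_image_ball | exists p].
have hpx : m * (h p - gam) < m * h x by rewrite ltr_pM2l //; apply: le_lt_trans hx; rewrite lerD2r.
have mgam : m * gam <= gam by rewrite ler_piMl // ltW.
have gE y : g y = m * h y by rewrite /h mulrA mulfV ?gt_eqF ?mul1r.
rewrite (sup_dual_elt_ball is_subspaceT dg ng) mulr2n.
move: gpgam; rewrite !gE; nra.
Qed.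

End SliceRestriction.

Lemma slice_anchor (R : realType) (X : completeNormedModType R) (S : set X) :
  is_slice_of_ball setT S -> exists p : X,
    forall Z, is_subspace Z -> Z p -> exists S', is_slice_of_ball Z S' /\ S' `<=` S.
Proof.
move=> [g [al [dg ng al0 ->]]].
pose gam := Num.min al 1 / 2.
have gam0 : 0 < gam by apply: divr_gt0 => //; rewrite lt_min; apply/andP.
have gam_al : gam *+ 2 <= al by rewrite /gam -mulr_natr divfK ?ge_min ?lexx.
have gam_half : gam <= 1 / 2 by rewrite /gam ler_pM2r // ge_min lexx orbT.
have hs : has_sup (g @` unit_ball setT) by apply: has_sup_image_ball; rewrite ?ng.
have [_ [p Bp <-]] := sup_adherent gam0 hs.
rewrite (sup_dual_elt_ball is_subspaceT dg ng) => gp.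
exists p => Z sZ Zp; have BZp : unit_ball Z p by split; last exact: Bp.2.
have gp0 : 0 < g p by lra.
exists (slice (unit_ball Z) (fun x => (dual_norm Z g)^-1 * g x) gam); split.
  exact: (renormalized_slice_of_ball dg ng BZp gp0 (gam := gam) gam0).
apply: subset_trans (slice_widen gam_al).
exact: (renormalized_slice_sub dg ng sZ BZp gp0 (gam := gam) gam0 gp).
Qed.

(* The closed linear span of a countable family e, presented as the closure of
   the set of rational linear combinations of members of e. *)
Section RationalSpan.
Variables (R : realType) (X : completeNormedModType R) (T : countType) (e : T -> X).

Definition rat_combination (s : seq (rat * T)) : X :=
  \sum_(q <- s) (ratr q.1 : R) *: e q.2.
Definition rat_span : set X := range rat_combination.
Definition closed_span : set X := closure rat_span.

(* Finite sequences of (rational, index) pairs form a countable type. *)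
Lemma rat_span_countable : countable rat_span.
Proof. exact: sub_countable (card_image_le _ _) (countableP _). Qed.

Lemma rat_span0 : rat_span 0.
Proof. by exists [::] => //; rewrite /rat_combination big_nil. Qed.

Lemma rat_spanD x y : rat_span x -> rat_span y -> rat_span (x + y).
Proof.
by move=> [s _ <-] [t _ <-]; exists (s ++ t) => //; rewrite /rat_combination big_cat.
Qed.

Lemma rat_spanZ (q : rat) x : rat_span x -> rat_span ((ratr q : R) *: x).
Proof.
move=> [s _ <-]; exists (map (fun c => (q * c.1, c.2)) s) => //.
rewrite /rat_combination big_map scaler_sumr; apply: eq_bigr => c _ /=.
by rewrite rmorphM scalerA.
Qed.

Lemma rat_span_gen t : rat_span (e t).
Proof.
by exists [:: (1, t)] => //; rewrite /rat_combination big_seq1 /= rmorph1 scale1r.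
Qed.

(* Real multiples of rational combinations stay in the closure, by density
   of the rationals and continuity of t |-> t *: x. *)
Lemma closed_span_realZ (a : R) x : rat_span x -> closed_span (a *: x).
Proof.
move=> Sx; apply: (closure_image_sub (B := rat_span) (@scalel_continuous _ _ x) (A := range (@ratr R))).
  by move=> _ [_ [q _ <-] <-]; apply: subset_closure; exact: rat_spanZ.
by exists a => //; apply: dense_closure; exact: dense_rat.
Qed.

Lemma closed_spanZ (a : R) x : closed_span x -> closed_span (a *: x).
Proof.
move=> Sx; apply: (closure_image_sub (A := rat_span) (B := rat_span) (@scaler_continuous _ _ a)); last by exists x.
by move=> _ [y Sy <-]; exact: closed_span_realZ.
Qed.

Lemma translation_continuous (y : X) : continuous (fun x => x + y).
Proof. by move=> x; apply: cvgD; [exact: cvg_id | exact: cvg_cst]. Qed.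

Lemma closed_spanD x y : closed_span x -> closed_span y -> closed_span (x + y).
Proof.
have closedD_rat x' y' : closed_span x' -> rat_span y' -> closed_span (x' + y').
  move=> Sx' Sy'; apply: (closure_image_sub (A := rat_span) (B := rat_span) (@translation_continuous y')); last by exists x'.
  by move=> _ [z Sz <-]; apply: subset_closure; exact: rat_spanD.
move=> Sx Sy; rewrite addrC.
apply: (closure_image_sub (A := rat_span) (B := rat_span) (@translation_continuous x)); last by exists y.
by move=> _ [z Sz <-]; rewrite addrC; exact: closedD_rat.
Qed.

Lemma closed_span_subspace : closed_subspace closed_span.
Proof.
split; last exact: closed_closure.
split; first exact: subset_closure rat_span0.
by move=> a x y Sx Sy; apply: closed_spanD => //; exact: closed_spanZ.
Qed.

Lemma closed_span_separable : separable_set closed_span.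
Proof. by exists rat_span; split; [exact: rat_span_countable | exact: subset_closure |]. Qed.

Lemma closed_span_gen t : closed_span (e t).
Proof. exact: subset_closure (rat_span_gen t). Qed.

End RationalSpan.

Section AnchoredCombinations.
Variables (R : realType) (X : completeNormedModType R).

Lemma diam_mono (A B : set X) : A `<=` B -> (diam A <= diam B)%E.
Proof.
move=> AB; apply: ereal_sup_le => _ [x Ax [y Ay <-]].
by exists x; [apply: AB | exists y => //; apply: AB].
Qed.

Lemma convex_comb_setS n (lam : 'I_n -> R) (S S' : 'I_n -> set X) :
  (forall i, S i `<=` S' i) -> convex_comb_set lam S `<=` convex_comb_set lam S'.
Proof. by move=> SS' _ [x [Sx ->]]; exists x; split => // i; apply: SS'. Qed.

Record anchored_comb := AnchoredComb {
  ac_n : nat; ac_lam : 'I_ac_n -> R; ac_S : 'I_ac_n -> set X; ac_anchor : 'I_ac_n -> X }.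
Arguments ac_lam : clear implicits.
Arguments ac_S : clear implicits.
Arguments ac_anchor : clear implicits.

Definition anchored_small (eps : R) (c : anchored_comb) : Prop :=
  [/\ forall i, 0 < ac_lam c i, \sum_(i < ac_n c) ac_lam c i = 1,
      (diam (convex_comb_set (ac_lam c) (ac_S c)) < eps%:E)%E &
      forall i Z, is_subspace Z -> Z (ac_anchor c i) ->
        exists S', is_slice_of_ball Z S' /\ S' `<=` ac_S c i].

Lemma BSCSP_anchored : BSCSP X -> forall eps, 0 < eps -> exists c, anchored_small eps c.
Proof.
move=> hX eps e0; have [n [lam [S [lam0 lam1 slS dS]]]] := hX eps e0.
have [anchor hanchor] := choice (fun i => slice_anchor (slS i)).
by exists (AnchoredComb lam S anchor); split.
Qed.

End AnchoredCombinations.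
Arguments ac_lam {R X} _ _.
Arguments ac_S {R X} _ _.
Arguments ac_anchor {R X} _ _.

Theorem mainTheorem1 (R : realType) (X : completeNormedModType R) :
  BSCSP X ->
  forall Y : set X, closed_subspace Y -> separable_set Y ->
  exists Z : set X, [/\ closed_subspace Z, separable_set Z, Y `<=` Z & BSCSP_on Z].
Proof.
move=> hX Y _ [DY [cDY _ YDY]].
have /pcard_surjP [enumY surjY] := cDY.
have /choice [F hF] : forall k : nat, exists c : anchored_comb X, anchored_small k.+1%:R^-1 c.
  by move=> k; apply: BSCSP_anchored; rewrite ?invr_gt0.
pose e (u : nat + {k : nat & 'I_(ac_n (F k))}) : X :=
  match u with inl j => enumY j | inr (existT k i) => ac_anchor (F k) i end.
exists (closed_span e); split.
- exact: closed_span_subspace.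
- exact: closed_span_separable.
- apply: subset_trans YDY (closureS _) => d /surjY [j _ <-].
  exact: rat_span_gen e (inl j).
move=> eps e0; have [k hk] := natSinv_lt e0.
have [lam0 lam1 hdiam hS] := hF k.
have /choice [S' hS'] : forall i, exists S',
    is_slice_of_ball (closed_span e) S' /\ S' `<=` ac_S (F k) i.
  move=> i; apply: hS; first exact: (closed_span_subspace e).1.
  exact: closed_span_gen e (inr (existT _ k i)).
exists (ac_n (F k)), (ac_lam (F k)), S'; split => //; first by move=> i; exact: (hS' i).1.
apply: le_lt_trans (diam_mono (convex_comb_setS (fun i => (hS' i).2))) _.
by apply: lt_trans hdiam _; rewrite lte_fin.
Qed.
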